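(* Let $k \geq 2$ be an integer, let $u_1, \dots, u_k \in \mathbb{R}$ be real numbers that are not all equal, and let $c_1, \dots, c_k \in \mathbb{R}$. Let $(a, b) \in \mathbb{R}^2$ be a solution of the optimization problem $$\min_{a, b \in \mathbb{R}} \sum_{i=1}^k (a u_i + b + c_i)^2 .$$ Then $$a \leq \zeta(\mathbf{u}) \max_{1 \leq i \leq k} |c_i| \qquad \text{and} \qquad b = -\frac{1}{k}\sum_{i=1}^k c_i - \frac{a}{k}\sum_{i=1}^k u_i,$$ where $\zeta(\mathbf{u}) = \dfrac{2\sum_{1 \leq i<j \leq k}|u_i-u_j|}{\sum_{1 \leq i<j \leq k}(u_i-u_j)^2}$.
   Context: $\mathbf{u} = (u_1, \dots, u_k)$ denotes the vector of the given constants $u_i$. *)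

From mathcomp Require Import all_boot all_order all_algebra.
From mathcomp Require Import reals.
Set Implicit Arguments. Unset Strict Implicit. Unset Printing Implicit Defensive.
Import Order.TTheory GRing.Theory Num.Theory.
Local Open Scope ring_scope.

Definition lsq_obj (R : realType) (k : nat) (u c : 'I_k -> R) (a b : R) : R :=
  \sum_(i < k) (a * u i + b + c i) ^+ 2.

Definition zeta (R : realType) (k : nat) (u : 'I_k -> R) : R :=
  (2 * \sum_(i < k) \sum_(j < k | (i < j)%N) `|u i - u j|) /
  (\sum_(i < k) \sum_(j < k | (i < j)%N) (u i - u j) ^+ 2).

(* max_{1<=i<=k} |c_i| (nonnegative values, so 0 is a neutral element). *)
Definition max_abs (R : realType) (k : nat) (c : 'I_k -> R) : R :=
  \big[Num.max/0]_(i < k) `|c i|.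

From mathcomp Require Import all_boot all_order all_algebra.
From mathcomp Require Import reals.
From mathcomp Require Import ring.
Set Implicit Arguments. Unset Strict Implicit. Unset Printing Implicit Defensive.
Import Order.TTheory GRing.Theory Num.Theory.
Local Open Scope ring_scope.

(* Optimality of (a, b) along the directions (0, 1) and (1, 0) gives the normal
   equations [\sum_i r_i = 0] and [\sum_i r_i u_i = 0] for the residuals
   [r_i = a u_i + b + c_i]; the first one is the formula for b.  By the identity
   [\sum_(i<j) (x_i - x_j)(y_i - y_j) = k \sum_i x_i y_i - \sum_i x_i \sum_i y_i],
   the normal equations give [\sum_(i<j) (u_i - u_j)(r_i - r_j) = 0], that is
   [a \sum_(i<j) (u_i - u_j)^2 = - \sum_(i<j) (u_i - u_j)(c_i - c_j)], and
   [|c_i - c_j| <= 2 max_i |c_i|] bounds the right-hand side. *)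

Lemma sum_pairs_sym (V : nmodType) (k : nat) (f : 'I_k -> 'I_k -> V) :
  (forall i j, f i j = f j i) -> (forall i, f i i = 0) ->
  \sum_(i < k) \sum_(j < k) f i j = (\sum_(i < k) \sum_(j < k | (i < j)%N) f i j) *+ 2.
Proof.
move=> f_sym f_diag.
have split_row i : \sum_(j < k) f i j =
    \sum_(j < k | (i < j)%N) f i j + \sum_(j < k | (j < i)%N) f i j.
  rewrite (bigID (fun j : 'I_k => (i < j)%N)) /= [X in _ + X](bigD1 i) ?ltnn //=.
  rewrite f_diag add0r.
  congr (_ + _); apply: eq_bigl => j.
  by rewrite -leqNgt ltn_neqAle andbC; congr (_ && _); rewrite -(inj_eq val_inj).
rewrite (eq_bigr _ (fun i _ => split_row i)) big_split /= mulr2n; congr (_ + _).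
rewrite (exchange_big_dep xpredT) //=.
by apply: eq_bigr => i _; apply: eq_bigr => j _; rewrite f_sym.
Qed.

Lemma sum_pairs_mul_diff (R : numDomainType) (k : nat) (x y : 'I_k -> R) :
  \sum_(i < k) \sum_(j < k | (i < j)%N) (x i - x j) * (y i - y j) =
  k%:R * \sum_(i < k) x i * y i - (\sum_(i < k) x i) * (\sum_(i < k) y i).
Proof.
apply/eqP; rewrite -(eqr_pMn2r (isT : (0 < 2)%N)) -sum_pairs_sym; last 2 first.
- by move=> i j; ring.
- by move=> i; ring.
apply/eqP.
have row i : \sum_(j < k) (x i - x j) * (y i - y j) =
    k%:R * (x i * y i) - x i * \sum_(j < k) y j - y i * \sum_(j < k) x j
    + \sum_(j < k) x j * y j.
  rewrite (eq_bigr (fun j => x i * y i - x i * y j - y i * x j + x j * y j));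
    last by move=> j _; ring.
  by rewrite !big_split !sumrN /= sumr_const card_ord -!mulr_sumr mulr_natl.
rewrite (eq_bigr _ (fun i _ => row i)) !big_split !sumrN /= sumr_const card_ord.
rewrite -!mulr_sumr -!mulr_suml; ring.
Qed.

Lemma sum_pairs_sqr_gt0 (R : realDomainType) (k : nat) (x : 'I_k -> R) :
  (exists i j, x i != x j) ->
  0 < \sum_(i < k) \sum_(j < k | (i < j)%N) (x i - x j) ^+ 2.
Proof.
case=> i [j xij]; rewrite -(ltr_pMn2r (isT : (0 < 2)%N)) mul0rn -sum_pairs_sym;
  last 2 first.
- by move=> l m; ring.
- by move=> l; ring.
have sqr_diff_ge0 l m : 0 <= (x l - x m) ^+ 2 by exact: sqr_ge0.
rewrite (bigD1 i) //= (bigD1 j) //= -addrA ltr_wpDr //.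
  by rewrite addr_ge0 ?sumr_ge0 // => l _; rewrite sumr_ge0.
by rewrite exprn_even_gt0 // subr_eq0.
Qed.

Lemma sum_sqr_min_orth (R : realFieldType) (I : Type) (r : seq I) (x y : I -> R) :
  (forall t, \sum_(i <- r) x i ^+ 2 <= \sum_(i <- r) (x i + t * y i) ^+ 2) ->
  \sum_(i <- r) x i * y i = 0.
Proof.
set S := \sum_(i <- r) x i * y i; set Q := \sum_(i <- r) y i ^+ 2 => x_min.
have Q_ge0 : 0 <= Q by rewrite sumr_ge0 // => i _; exact: sqr_ge0.
have expand t : \sum_(i <- r) (x i + t * y i) ^+ 2 =
    \sum_(i <- r) x i ^+ 2 + t * (S *+ 2 + t * Q).
  rewrite /S /Q -sumrMnl mulr_sumr -big_split mulr_sumr -big_split /=.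
  by apply: eq_bigr => i _; ring.
(* At [t = - S / (Q + 1)] the increment is [- t ^+ 2 * (Q + 2)], negative unless
   [S = 0]; dividing by [Q + 1] rather than [Q] avoids a case split on [Q = 0]. *)
pose t := - S / (Q + 1).
have tQ : t * (Q + 1) = - S by rewrite /t mulfVK // gt_eqF // ltr_wpDl.
have := x_min t; rewrite expand lerDl.
have -> : t * (S *+ 2 + t * Q) = - (t ^+ 2 * (Q + 2)).
  have -> : S = - (t * (Q + 1)) by rewrite tQ opprK.
  ring.
rewrite oppr_ge0 pmulr_lle0 ?ltr_wpDl // => t2_le0.
have t0 : t = 0 by apply/eqP; rewrite -sqrf_eq0 eq_le t2_le0 sqr_ge0.
by apply: oppr_inj; rewrite -tQ t0 mul0r oppr0.
Qed.

Lemma norm_sum_pairs_mul_diff_le (R : realDomainType) (k : nat) (x y : 'I_k -> R) M :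
  (forall i, `|y i| <= M) ->
  `|\sum_(i < k) \sum_(j < k | (i < j)%N) (x i - x j) * (y i - y j)| <=
  (\sum_(i < k) \sum_(j < k | (i < j)%N) `|x i - x j|) * (2 * M).
Proof.
move=> y_le; rewrite mulr_suml; apply: le_trans (ler_norm_sum _ _ _) _.
apply: ler_sum => i _; rewrite mulr_suml; apply: le_trans (ler_norm_sum _ _ _) _.
apply: ler_sum => j _; rewrite normrM ler_wpM2l //.
by rewrite mulr2n mulrDl mul1r (le_trans (ler_normB _ _)) // lerD.
Qed.

Lemma lsq_opt_normal_eqs (R : realType) (k : nat) (u c : 'I_k -> R) a b :
  (forall a' b', lsq_obj u c a b <= lsq_obj u c a' b') ->
  \sum_(i < k) (a * u i + b + c i) = 0 /\
  \sum_(i < k) (a * u i + b + c i) * u i = 0.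
Proof.
move=> opt.
have shift_b t : lsq_obj u c a (b + t) = \sum_(i < k) (a * u i + b + c i + t * 1) ^+ 2.
  by apply: eq_bigr => i _; congr (_ ^+ 2); ring.
have shift_a t : lsq_obj u c (a + t) b = \sum_(i < k) (a * u i + b + c i + t * u i) ^+ 2.
  by apply: eq_bigr => i _; congr (_ ^+ 2); ring.
split; last by apply: sum_sqr_min_orth => t; rewrite -shift_a; exact: opt.
rewrite -(eq_bigr _ (fun i _ => mulr1 _)).
by apply: sum_sqr_min_orth => t; rewrite -shift_b; exact: opt.
Qed.

Lemma lsq_opt_slope (R : realType) (k : nat) (u c : 'I_k -> R) a b :
  (forall a' b', lsq_obj u c a b <= lsq_obj u c a' b') ->
  a * \sum_(i < k) \sum_(j < k | (i < j)%N) (u i - u j) ^+ 2 =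
  - \sum_(i < k) \sum_(j < k | (i < j)%N) (u i - u j) * (c i - c j).
Proof.
move=> /lsq_opt_normal_eqs[sum_res sum_res_u].
have pairs_res0 : \sum_(i < k) \sum_(j < k | (i < j)%N)
    ((a * u i + b + c i) - (a * u j + b + c j)) * (u i - u j) = 0.
  rewrite (sum_pairs_mul_diff (fun i => a * u i + b + c i)) sum_res sum_res_u.
  by rewrite mulr0 mul0r subr0.
apply/eqP; rewrite -addr_eq0; apply/eqP.
rewrite -[RHS]pairs_res0 mulr_sumr -big_split.
apply: eq_bigr => i _; rewrite mulr_sumr -big_split /=; apply: eq_bigr => j _; ring.
Qed.

Theorem propositionA1 (R : realType) (k : nat) (hk : (2 <= k)%N)
  (u c : 'I_k -> R)
  (hu : exists i j : 'I_k, u i != u j)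
  (a b : R)
  (hopt : forall a' b' : R, lsq_obj u c a b <= lsq_obj u c a' b') :
  a <= zeta u * max_abs c /\
  b = - (k%:R)^-1 * (\sum_(i < k) c i) - a / k%:R * (\sum_(i < k) u i).
Proof.
split.
  rewrite /zeta mulrAC ler_pdivlMr ?sum_pairs_sqr_gt0 // (lsq_opt_slope hopt).
  rewrite -mulrA mulrCA; apply: ler_normlW; rewrite normrN.
  by apply: norm_sum_pairs_mul_diff_le => i; exact: le_bigmax.
have k_neq0 : k%:R != 0 :> R by rewrite pnatr_eq0 -lt0n (leq_trans _ hk).
have [sum_res _] := lsq_opt_normal_eqs hopt.
rewrite !big_split /= -mulr_sumr sumr_const card_ord in sum_res.
have bk : b *+ k = - (a * \sum_(i < k) u i + \sum_(i < k) c i).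
  by apply/eqP; rewrite -addr_eq0 addrCA addrA sum_res.
by rewrite -[b](mulfK k_neq0) mulr_natr bk; field.
Qed.
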